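(* Assume each $f_i$ is differentiable and $L$-smooth. Then for every $x\in\mathrm{St}(d,r)^\epsilon$, $\|\nabla\mathcal{L}(x)\|_F\le C\|\Lambda(x)\|_F$, where $C=\frac{3L'}{\lambda(1-\epsilon)}+2$.
   Context: Notation: $\mathrm{sym}(A)=\frac12(A+A^\top)$, $\mathrm{skew}(A)=\frac12(A-A^\top)$; $\langle A,B\rangle=\mathrm{Tr}(AB^\top)$; $\|\cdot\|_F$ Frobenius norm. $\mathrm{St}(d,r)=\{x\in\mathbb{R}^{d\times r}:x^\top x=I_r\}$; for $\epsilon\in(0,3/4)$, $\mathrm{St}(d,r)^\epsilon=\{x:\|x^\top x-I_r\|_F\le\epsilon\}$. Functions: $f_1,\dots,f_n:\mathbb{R}^{d\times r}\to\mathbb{R}$, $L$-smooth meaning $f_i(y)\le f_i(x)+\langle\nabla f_i(x),y-x\rangle+\frac L2\|y-x\|_F^2$; $f=\frac1n\sum_if_i$ is $C^2$. $\mathrm{grad}\, g(x)=\mathrm{skew}(\nabla g(x)x^\top)x$. For $\lambda>0$, $\Lambda(x)=\mathrm{grad} f(x)+\lambda x(x^\top x-I_r)$, $\Lambda_i$ analogously with $f_i$. $\hat L=\max(L,\max_{x\in\mathrm{St}(d,r)^\epsilon}\|\nabla f(x)\|_F)$, $s=\sup_{x\in\mathrm{St}(d,r)^\epsilon}\|\mathrm{sym}(x^\top\nabla f(x))\|_F$, $\gamma\ge\frac{2}{3-4\epsilon}\big(L(1-\epsilon)+3s+\hat L^2\frac{(1+\epsilon)^2}{\lambda(1-\epsilon)}\big)$.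 Merit function $\mathcal{L}(x)=f(x)-\frac12\langle\mathrm{sym}(x^\top\nabla f(x)),x^\top x-I_r\rangle+\frac\gamma4\|x^\top x-I_r\|_F^2$. $L_{\mathcal{L}}$: Lipschitz constant of $\nabla\mathcal{L}$ on $\mathrm{St}(d,r)^\epsilon$; $L_\Lambda$: constant such that $\Lambda$ and all $\Lambda_i$ are $L_\Lambda$-Lipschitz (standing property); $L'=\max\{\hat L,L_{\mathcal{L}},L_\Lambda\}$. *)

From HB Require Import structures.
From mathcomp Require Import all_boot all_order all_algebra.
From mathcomp Require Import all_classical all_reals all_analysis.
Set Implicit Arguments. Unset Strict Implicit. Unset Printing Implicit Defensive.
Import Order.TTheory GRing.Theory Num.Theory.
Import numFieldNormedType.Exports.
Local Open Scope classical_set_scope.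
Local Open Scope ring_scope.

Section Defs.
Variable R : realType.

Definition frob_inner (m n : nat) (A B : 'M[R]_(m, n)) : R := \tr (A *m B^T).
Definition frob_norm (m n : nat) (A : 'M[R]_(m, n)) : R :=
  Num.sqrt (frob_inner A A).

Definition msym (m : nat) (A : 'M[R]_m) : 'M[R]_m := 2^-1 *: (A + A^T).
Definition mskew (m : nat) (A : 'M[R]_m) : 'M[R]_m := 2^-1 *: (A - A^T).

Definition ortho_defect (d r : nat) (x : 'M[R]_(d, r)) : 'M[R]_r :=
  x^T *m x - 1%:M.

Definition StEps (d r : nat) (eps : R) : set 'M[R]_(d, r) :=
  [set x | frob_norm (ortho_defect x) <= eps].

Definition has_gradient (d r : nat) (g : 'M[R]_(d, r) -> R)
  (G : 'M[R]_(d, r) -> 'M[R]_(d, r)) : Prop :=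
  forall x, differentiable g x /\ forall h, 'd g x h = frob_inner (G x) h.

(* L-smoothness (descent-lemma form, as in the paper) *)
Definition L_smooth (d r : nat) (L : R) (g : 'M[R]_(d, r) -> R)
  (G : 'M[R]_(d, r) -> 'M[R]_(d, r)) : Prop :=
  forall x y, g y <= g x + frob_inner (G x) (y - x) + L / 2 * frob_norm (y - x) ^+ 2.

Definition frob_lipschitz_on (d r : nat) (A : set 'M[R]_(d, r)) (K : R)
  (G : 'M[R]_(d, r) -> 'M[R]_(d, r)) : Prop :=
  forall x y, A x -> A y -> frob_norm (G x - G y) <= K * frob_norm (x - y).

Definition rgrad (d r : nat) (G : 'M[R]_(d, r) -> 'M[R]_(d, r))
  (x : 'M[R]_(d, r)) : 'M[R]_(d, r) := mskew (G x *m x^T) *m x.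

Definition LambdaF (d r : nat) (lam : R) (G : 'M[R]_(d, r) -> 'M[R]_(d, r))
  (x : 'M[R]_(d, r)) : 'M[R]_(d, r) :=
  rgrad G x + lam *: (x *m ortho_defect x).

Definition merit (d r : nat) (gam : R) (f : 'M[R]_(d, r) -> R)
  (G : 'M[R]_(d, r) -> 'M[R]_(d, r)) (x : 'M[R]_(d, r)) : R :=
  f x - 2^-1 * frob_inner (msym (x^T *m G x)) (ortho_defect x)
      + gam / 4 * frob_norm (ortho_defect x) ^+ 2.

Definition avgR (n : nat) (T : Type) (F : 'I_n -> T -> R) : T -> R :=
  fun x => n%:R^-1 * \sum_(i < n) F i x.
Definition avgM (n d r : nat) (T : Type) (F : 'I_n -> T -> 'M[R]_(d, r))
  : T -> 'M[R]_(d, r) :=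
  fun x => n%:R^-1 *: \sum_(i < n) F i x.

End Defs.

From HB Require Import structures.
From mathcomp Require Import all_boot all_order all_algebra.
From mathcomp Require Import all_classical all_reals all_analysis.
From mathcomp Require Import complex spectral.
From mathcomp Require Import ring lra.
Set Implicit Arguments. Unset Strict Implicit. Unset Printing Implicit Defensive.
Import Order.TTheory GRing.Theory Num.Theory.
Import numFieldNormedType.Exports.
Local Open Scope classical_set_scope.
Local Open Scope ring_scope.

(** Write phi for the norm of the defect [x^T x - I].  The polar
    projection [y] of [x] onto the Stiefel manifold satisfies
    [|x - y| (1 + sqrt (1 - phi)) <= phi], while pairing [Lambda x] with [x]
    gives [lam (1 - phi) phi <= sqrt (1 + phi) |Lambda x|]; for [phi <= 3/4]
    these combine into [lam (1 - eps) |x - y| <= |Lambda x|].  At the Stiefel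
    point [y] the merit gradient is the tangent projection
    [G - y sym (y^T G)] of [G = grad f y], whose norm is at most
    [2 |skew (G y^T) y| = 2 |Lambda y|].  The Lipschitz bounds on the merit
    gradient and on [Lambda] carry this from [y] back to [x], at the price
    [3 L' |x - y| <= 3 L' / (lam (1 - eps)) |Lambda x|]. *)

(** * Frobenius inner product and norm *)

Section FrobeniusInner.
Variables (R : realType) (m n : nat).
Implicit Types A B C : 'M[R]_(m, n).

Lemma frob_innerE A B : frob_inner A B = \sum_i \sum_j A i j * B i j.
Proof.
rewrite /frob_inner /mxtrace; apply: eq_bigr => i _; rewrite !mxE.
by apply: eq_bigr => j _; rewrite mxE.
Qed.

Lemma frob_innerC A B : frob_inner A B = frob_inner B A.
Proof. by rewrite !frob_innerE; apply: eq_bigr => i _; apply: eq_bigr => j _; rewrite mulrC. Qed.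

Lemma frob_innerDl A B C : frob_inner (A + B) C = frob_inner A C + frob_inner B C.
Proof. by rewrite /frob_inner mulmxDl mxtraceD. Qed.

Lemma frob_innerZl k A B : frob_inner (k *: A) B = k * frob_inner A B.
Proof. by rewrite /frob_inner -scalemxAl mxtraceZ. Qed.

Lemma frob_innerNl A B : frob_inner (- A) B = - frob_inner A B.
Proof. by rewrite -scaleN1r frob_innerZl mulN1r. Qed.

Lemma frob_innerBl A B C : frob_inner (A - B) C = frob_inner A C - frob_inner B C.
Proof. by rewrite frob_innerDl frob_innerNl. Qed.

Lemma frob_innerDr A B C : frob_inner C (A + B) = frob_inner C A + frob_inner C B.
Proof. by rewrite frob_innerC frob_innerDl !(frob_innerC C). Qed.

Lemma frob_innerZr k A B : frob_inner B (k *: A) = k * frob_inner B A.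
Proof. by rewrite frob_innerC frob_innerZl frob_innerC. Qed.

Lemma frob_innerNr A B : frob_inner B (- A) = - frob_inner B A.
Proof. by rewrite frob_innerC frob_innerNl frob_innerC. Qed.

Lemma frob_innerBr A B C : frob_inner C (A - B) = frob_inner C A - frob_inner C B.
Proof. by rewrite frob_innerDr frob_innerNr. Qed.

Lemma frob_inner0r A : frob_inner A 0 = 0.
Proof. by rewrite /frob_inner trmx0 mulmx0 mxtrace0. Qed.

Lemma frob_inner_suml (I : Type) (s : seq I) (F : I -> 'M[R]_(m, n)) B :
  frob_inner (\sum_(i <- s) F i) B = \sum_(i <- s) frob_inner (F i) B.
Proof. by rewrite /frob_inner mulmx_suml raddf_sum. Qed.

Lemma frob_inner_tr A B : frob_inner A^T B^T = frob_inner A B.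
Proof. by rewrite /frob_inner trmxK -mxtrace_tr trmx_mul trmxK mxtrace_mulC. Qed.

Lemma frob_inner_ge0 A : 0 <= frob_inner A A.
Proof.
by rewrite frob_innerE; apply: sumr_ge0 => i _; apply: sumr_ge0 => j _; rewrite -expr2 sqr_ge0.
Qed.

Lemma frob_inner_eq0 A : (frob_inner A A == 0) = (A == 0).
Proof.
apply/idP/eqP => [|->]; last by rewrite frob_inner0r.
rewrite frob_innerE psumr_eq0 => [/allP A0|i _]; last first.
  by apply: sumr_ge0 => j _; rewrite -expr2 sqr_ge0.
apply/matrixP => i j; move: (A0 i (mem_index_enum _)) => /implyP/(_ isT).
rewrite psumr_eq0 => [/allP/(_ j (mem_index_enum _))/implyP/(_ isT)|k _].
  by rewrite mulf_eq0 orbb mxE => /eqP.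
by rewrite -expr2 sqr_ge0.
Qed.

Lemma frob_inner_eq A B : (forall C, frob_inner A C = frob_inner B C) -> A = B.
Proof.
move=> AB; apply/eqP; rewrite -subr_eq0 -frob_inner_eq0.
by rewrite frob_innerBl !AB subrr.
Qed.

Lemma frob_inner_CauchySchwarz A B :
  frob_inner A B ^+ 2 <= frob_inner A A * frob_inner B B.
Proof.
set a := frob_inner A A; set b := frob_inner B B; set c := frob_inner A B.
have [b0|bpos] := eqVneq b 0.
  move: b0 => /eqP; rewrite /b frob_inner_eq0 => /eqP B0.
  by rewrite /c B0 frob_inner0r expr0n mulr_ge0 ?frob_inner_ge0.
have := frob_inner_ge0 (b *: A - c *: B).
rewrite !(frob_innerBl, frob_innerBr, frob_innerZl, frob_innerZr) (frob_innerC B A) -/a -/b -/c.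
have -> : b * (b * a - c * c) - c * (b * c - c * b) = b * (a * b - c ^+ 2) by ring.
by rewrite pmulr_rge0 ?subr_ge0 // lt0r bpos frob_inner_ge0.
Qed.

End FrobeniusInner.

Lemma frob_inner_mull (R : realType) m n p (A : 'M[R]_(m, n)) (B : 'M[R]_(n, p)) C :
  frob_inner (A *m B) C = frob_inner B (A^T *m C).
Proof. by rewrite /frob_inner trmx_mul trmxK mulmxA [in RHS]mxtrace_mulC mulmxA. Qed.

Section FrobeniusNorm.
Variables (R : realType) (m n : nat).
Implicit Types A B : 'M[R]_(m, n).

Lemma frob_norm_ge0 A : 0 <= frob_norm A.
Proof. exact: sqrtr_ge0. Qed.

Lemma frob_norm_sqr A : frob_norm A ^+ 2 = frob_inner A A.
Proof. by rewrite sqr_sqrtr // frob_inner_ge0. Qed.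

Lemma frob_norm0 : frob_norm (0 : 'M[R]_(m, n)) = 0.
Proof. by rewrite /frob_norm frob_inner0r sqrtr0. Qed.

Lemma frob_normZ k A : frob_norm (k *: A) = `|k| * frob_norm A.
Proof.
by rewrite /frob_norm frob_innerZl frob_innerZr mulrA -expr2 sqrtrM ?sqr_ge0 // sqrtr_sqr.
Qed.

Lemma frob_normN A : frob_norm (- A) = frob_norm A.
Proof. by rewrite -scaleN1r frob_normZ normrN1 mul1r. Qed.

Lemma frob_norm_distC A B : frob_norm (A - B) = frob_norm (B - A).
Proof. by rewrite -frob_normN opprB. Qed.

Lemma frob_inner_le_norm A B : frob_inner A B <= frob_norm A * frob_norm B.
Proof.
apply: (le_trans (ler_norm _)); rewrite -sqrtr_sqr -sqrtrM ?frob_inner_ge0 //.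
exact/ler_wsqrtr/frob_inner_CauchySchwarz.
Qed.

Lemma ler_frob_normD A B : frob_norm (A + B) <= frob_norm A + frob_norm B.
Proof.
rewrite -(ler_pXn2r (_ : 0 < 2)%N) ?nnegrE ?addr_ge0 ?frob_norm_ge0 //.
rewrite sqrrD !frob_norm_sqr frob_innerDl !frob_innerDr (frob_innerC B A).
by have := frob_inner_le_norm A B; lra.
Qed.

Lemma frob_norm_le_add_dist A B : frob_norm A <= frob_norm B + frob_norm (A - B).
Proof. by have := ler_frob_normD B (A - B); rewrite addrC subrK. Qed.

End FrobeniusNorm.

Lemma frob_inner_mulmx_le (R : realType) m n p (A : 'M[R]_(m, n)) (B : 'M[R]_(n, p)) :
  frob_inner (A *m B) (A *m B) <= frob_inner A A * frob_inner B B.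
Proof.
have entry i k : (A *m B) i k * (A *m B) i k <=
    (\sum_j A i j * A i j) * \sum_j B j k * B j k.
  have := frob_inner_CauchySchwarz (row i A) (col k B)^T.
  rewrite !frob_innerE !big_ord1 mxE expr2.
  by under eq_bigr do rewrite !mxE; under [X in _ <= X * _]eq_bigr do rewrite !mxE;
     under [X in _ <= _ * X]eq_bigr do rewrite !mxE.
rewrite !frob_innerE big_distrl /=; apply: ler_sum => i _.
by rewrite [X in _ * X]exchange_big /= mulr_sumr; apply: ler_sum => k _.
Qed.

Lemma ler_frob_norm_mulmx (R : realType) m n p (A : 'M[R]_(m, n)) (B : 'M[R]_(n, p)) :
  frob_norm (A *m B) <= frob_norm A * frob_norm B.
Proof. by rewrite -sqrtrM ?frob_inner_ge0 //; exact/ler_wsqrtr/frob_inner_mulmx_le. Qed.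

(** * Functional calculus for symmetric matrices *)

Lemma horner_mx_tr (K : comNzRingType) n (A : 'M[K]_n.+1) (q : {poly K}) :
  A^T = A -> (horner_mx A q)^T = horner_mx A q.
Proof.
move=> AT; elim/poly_ind: q => [|q c IH]; first by rewrite rmorph0 trmx0.
rewrite rmorphD rmorphM /= horner_mx_X horner_mx_C raddfD /= tr_scalar_mx.
rewrite -[_ * A]/(_ *m A) trmx_mul IH AT.
by rewrite (comm_horner_mx q (erefl (A *m A))).
Qed.

Lemma poly_interpolation (K : fieldType) (g : K -> K) (s : seq K) :
  exists p : {poly K}, {in s, forall a, p.[a] = g a}.
Proof.
elim: s => [|a s [p Hp]]; first by exists 0.
have [sa|anotin] := boolP (a \in s).
  by exists p => b; rewrite in_cons => /predU1P[->|]; exact: Hp.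
pose w := \prod_(b <- s) ('X - b%:P).
have w0 b : b \in s -> w.[b] = 0.
  move=> bs; rewrite horner_prod; apply/eqP; rewrite prodf_seq_eq0.
  by apply/hasP; exists b; rewrite //= hornerXsubC subrr.
have wa : w.[a] != 0.
  rewrite horner_prod prodf_seq_neq0; apply/allP => b bs /=.
  by rewrite hornerXsubC subr_eq0; apply: contraNneq anotin => ->.
exists (p + ((g a - p.[a]) / w.[a]) *: w) => b; rewrite in_cons hornerD hornerZ.
case/predU1P => [->|bs]; first by rewrite divfK // addrC subrK.
by rewrite (w0 b bs) mulr0 addr0 Hp.
Qed.

Lemma symmetric_mx_spectrum (R : rcfType) n (A : 'M[R]_n.+1) : A^T = A ->
  exists e : 'I_n.+1 -> R,
    (forall q c, (forall i, q.[e i] = c) -> horner_mx A q = c%:M) /\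
    (forall q, \tr (horner_mx A q) = \sum_i q.[e i]).
Proof.
move=> AT; pose Ac := map_mx (real_complex R) A.
have Ac_herm : Ac \is hermsymmx.
  apply: realsym_hermsym.
    by rewrite is_hermitianmxE expr0 scale1r map_mx_id // /Ac map_trmx AT.
  by apply/mxOverP => i j; rewrite mxE; apply/complex_realP; eexists.
have /orthomx_spectralP Ac_diag := hermitian_normalmx Ac_herm.
have /mxOverP Dreal := hermitian_spectral_diag_real Ac_herm.
have Uunit := spectral_unit Ac.
set U := spectralmx Ac in Ac_diag Uunit; set D := spectral_diag Ac in Ac_diag Dreal.
exists (fun i => complex.Re (D 0 i)).
have calculus q : map_mx (real_complex R) (horner_mx A q) =
    invmx U *m diag_mx (\row_i (real_complex R q.[complex.Re (D 0 i)])) *m U.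
  rewrite map_horner_mx -/Ac Ac_diag horner_mx_uconjC // horner_mx_diag.
  congr (_ *m diag_mx _ *m _); apply/rowP => i; rewrite !mxE.
  by rewrite -[in LHS](RRe_real (Dreal 0 i)) horner_map.
split=> [q c qc|q].
  apply: (@map_mx_inj _ _ (real_complex R)); rewrite calculus map_scalar_mx.
  have -> : \row_i real_complex R q.[complex.Re (D 0 i)] = const_mx (real_complex R c).
    by apply/rowP => i; rewrite !mxE qc.
  by rewrite diag_const_mx mul_mx_scalar -scalemxAl mulVmx // scalemx1.
apply: complexI; rewrite -trace_map_mx calculus mxtrace_mulC mulmxA mulmxV //.
by rewrite mul1mx mxtrace_diag rmorph_sum; apply: eq_bigr => i _; rewrite mxE.
Qed.

(** * Distance to the Stiefel manifold *)

Lemma ortho_defect_tr (R : realType) d r (x : 'M[R]_(d, r)) :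
  (ortho_defect x)^T = ortho_defect x.
Proof. by rewrite /ortho_defect raddfB /= trmx_mul trmxK tr_scalar_mx. Qed.

Lemma polar_scalar_bound (R : rcfType) (phi e : R) : phi <= 1 -> - phi <= e ->
  (Num.sqrt (1 + e) - 1) ^+ 2 * (1 + Num.sqrt (1 - phi)) ^+ 2 <= e ^+ 2.
Proof.
move=> phi1 ephi.
have s2 : Num.sqrt (1 + e) ^+ 2 = 1 + e by rewrite sqr_sqrtr //; lra.
have t0 := sqrtr_ge0 (1 - phi).
have ts : Num.sqrt (1 - phi) <= Num.sqrt (1 + e) by apply: ler_wsqrtr; lra.
move: s2 t0 ts; set s := Num.sqrt (1 + e); set t := Num.sqrt (1 - phi) => s2 t0 ts.
have -> : e ^+ 2 = (s - 1) ^+ 2 * (s + 1) ^+ 2.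
  by rewrite -exprMn -subr_sqr s2 expr1n addrAC subrr add0r.
by rewrite ler_wpM2l ?sqr_ge0 // ler_sqr ?nnegrE; lra.
Qed.

(* The witness is [x P] with [P = (x^T x)^-1/2], realised as a polynomial in the
   defect that interpolates [t |-> (1 + t)^-1/2] on its spectrum. *)
Lemma polar_projection (R : realType) d r (x : 'M[R]_(d, r)) :
  frob_norm (ortho_defect x) < 1 ->
  exists y : 'M[R]_(d, r), ortho_defect y = 0 /\
    frob_norm (x - y) * (1 + Num.sqrt (1 - frob_norm (ortho_defect x)))
      <= frob_norm (ortho_defect x).
Proof.
case: r x => [|r] x.
  by exists x; split; [exact: flatmx0 | rewrite subrr frob_norm0 mul0r frob_norm_ge0].
set Phi := ortho_defect x; set phi := frob_norm Phi => phi1.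
have [e [e_const e_tr]] := symmetric_mx_spectrum (ortho_defect_tr x).
have e_sqr : \sum_i e i ^+ 2 = phi ^+ 2.
  under eq_bigr do rewrite -hornerXn.
  by rewrite -e_tr rmorphXn /= horner_mx_X frob_norm_sqr /frob_inner ortho_defect_tr.
have e_ge i : - phi <= e i.
  have : e i ^+ 2 <= phi ^+ 2.
    rewrite -e_sqr (bigD1 i) //= lerDl; apply: sumr_ge0 => j _; exact: sqr_ge0.
  by have : 0 <= phi := frob_norm_ge0 _; nra.
pose g t : R := (Num.sqrt (1 + t))^-1.
have [p p_e] := poly_interpolation g [seq e i | i <- index_enum 'I_r.+1].
have {}p_e i : p.[e i] = g (e i) by apply: p_e; exact/map_f/mem_index_enum.
have xTx : x^T *m x = horner_mx Phi (1 + 'X).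
  by rewrite rmorphD rmorph1 /= horner_mx_X /Phi /ortho_defect addrC subrK.
have gram q q' : (x *m horner_mx Phi q)^T *m (x *m horner_mx Phi q') =
    horner_mx Phi (q * (1 + 'X) * q').
  rewrite trmx_mul horner_mx_tr ?ortho_defect_tr // -mulmxA (mulmxA x^T) xTx mulmxA.
  by rewrite -[_ *m _ *m _]/(_ * _ * _) -!rmorphM.
have sqrt_e i : Num.sqrt (1 + e i) ^+ 2 = 1 + e i /\ Num.sqrt (1 + e i) != 0.
  by rewrite sqr_sqrtr ?sqrtr_eq0 -?ltNge; have := e_ge i; lra.
exists (x *m horner_mx Phi p); split.
  rewrite /ortho_defect gram (e_const _ 1) ?subrr // => i.
  have [] := sqrt_e i; rewrite !hornerE p_e /g; set s := Num.sqrt _ => s2 s0.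
  by rewrite -s2; field.
have -> : x - x *m horner_mx Phi p = x *m horner_mx Phi (1 - p).
  by rewrite rmorphB rmorph1 mulmxBr mulmx1.
have dist_sqr : frob_norm (x *m horner_mx Phi (1 - p)) ^+ 2 =
    \sum_i (Num.sqrt (1 + e i) - 1) ^+ 2.
  rewrite frob_norm_sqr /frob_inner mxtrace_mulC gram e_tr.
  apply: eq_bigr => i _; have [] := sqrt_e i; rewrite !hornerE p_e /g.
  by set s := Num.sqrt _ => s2 s0; rewrite -s2; field.
rewrite -(ler_pXn2r (_ : 0 < 2)%N) ?nnegrE ?mulr_ge0 ?frob_norm_ge0 ?addr_ge0 ?sqrtr_ge0 //.
rewrite exprMn dist_sqr -e_sqr mulr_suml; apply: ler_sum => i _.
by apply: polar_scalar_bound; [exact: ltW | exact: e_ge].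
Qed.

Lemma msym_tr (R : realType) m (A : 'M[R]_m) : (msym A)^T = msym A.
Proof. by rewrite /msym linearZ /= raddfD /= trmxK addrC. Qed.

Lemma mskew_tr (R : realType) m (A : 'M[R]_m) : (mskew A)^T = - mskew A.
Proof. by rewrite /mskew linearZ /= raddfB /= trmxK -scalerN opprB. Qed.

Lemma frob_inner_skew_sym (R : realType) m (A B : 'M[R]_m) :
  A^T = - A -> B^T = B -> frob_inner A B = 0.
Proof.
move=> AT BT; apply/eqP; rewrite -[_ == 0](mulrn_eq0 _ 2) mulr2n.
by rewrite addr_eq0 -{1}frob_inner_tr AT BT frob_innerNl.
Qed.

Lemma frob_norm_sym_le (R : realType) m (A B : 'M[R]_m) :
  A^T = - A -> B^T = B -> frob_norm B <= frob_norm (A + B).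
Proof.
move=> AT BT; apply: ler_wsqrtr.
rewrite frob_innerDl !frob_innerDr (frob_innerC B A) (frob_inner_skew_sym AT BT).
by rewrite addr0 add0r lerDr frob_inner_ge0.
Qed.

Section NearlyOrthonormal.
Variables (R : realType) (d r : nat) (x : 'M[R]_(d, r)).
Let phi := frob_norm (ortho_defect x).

Lemma frob_norm_mulmx_le p (A : 'M[R]_(r, p)) :
  frob_norm (x *m A) <= Num.sqrt (1 + phi) * frob_norm A.
Proof.
have phi0 : 0 <= phi := frob_norm_ge0 _.
rewrite -(ler_pXn2r (_ : 0 < 2)%N) ?nnegrE ?mulr_ge0 ?frob_norm_ge0 ?sqrtr_ge0 //.
rewrite exprMn !frob_norm_sqr sqr_sqrtr ?addr_ge0 // frob_inner_mull mulmxA.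
rewrite -[x^T *m x](subrK 1%:M) mulmxDl mul1mx frob_innerDr -/(ortho_defect x).
have := frob_inner_le_norm (ortho_defect x *m A) A.
have := ler_frob_norm_mulmx (ortho_defect x) A.
rewrite -/phi -frob_norm_sqr frob_innerC; have := frob_norm_ge0 A; nra.
Qed.

Lemma frob_norm_trmx_mulmx_le p (B : 'M[R]_(d, p)) :
  frob_norm (x^T *m B) <= Num.sqrt (1 + phi) * frob_norm B.
Proof.
set M := x^T *m B; have [M0|Mpos] := eqVneq (frob_norm M) 0.
  by rewrite M0 mulr_ge0 ?sqrtr_ge0 ?frob_norm_ge0.
rewrite -(ler_pM2l (_ : 0 < frob_norm M)); last by rewrite lt0r Mpos frob_norm_ge0.
rewrite -expr2 frob_norm_sqr {1}/M frob_inner_mull trmxK.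
apply: (le_trans (frob_inner_le_norm _ _)); rewrite mulrCA mulrC mulrA.
by rewrite ler_wpM2r ?frob_norm_ge0 ?frob_norm_mulmx_le.
Qed.

Lemma trmx_mul_LambdaF lam (G : 'M[R]_(d, r) -> 'M[R]_(d, r)) :
  x^T *m LambdaF lam G x =
  x^T *m rgrad G x + lam *: (ortho_defect x *m ortho_defect x + ortho_defect x).
Proof.
rewrite /LambdaF mulmxDr -scalemxAr (mulmxA x^T x) -[x^T *m x](subrK 1%:M).
by rewrite -/(ortho_defect x) mulmxDl mul1mx.
Qed.

Lemma trmx_mul_rgrad_skew (G : 'M[R]_(d, r) -> 'M[R]_(d, r)) :
  (x^T *m rgrad G x)^T = - (x^T *m rgrad G x).
Proof. by rewrite /rgrad !trmx_mul trmxK mskew_tr mulmxN mulNmx mulmxA. Qed.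

Lemma ortho_defect_le_LambdaF lam (G : 'M[R]_(d, r) -> 'M[R]_(d, r)) : 0 <= lam ->
  lam * (1 - phi) * phi <= Num.sqrt (1 + phi) * frob_norm (LambdaF lam G x).
Proof.
move=> lam0; set Phi := ortho_defect x.
apply: le_trans (frob_norm_trmx_mulmx_le _); rewrite trmx_mul_LambdaF.
apply: le_trans (frob_norm_sym_le (trmx_mul_rgrad_skew G) _); last first.
  by rewrite linearZ /= raddfD /= trmx_mul ortho_defect_tr.
rewrite frob_normZ ger0_norm // -mulrA ler_wpM2l //.
have := frob_norm_le_add_dist Phi (Phi *m Phi + Phi).
rewrite [Phi - _](_ : _ = - (Phi *m Phi)) ?frob_normN; last by rewrite opprD addrCA subrr addr0.
by have := ler_frob_norm_mulmx Phi Phi; rewrite -/phi; lra.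
Qed.

End NearlyOrthonormal.

(* This holds exactly for [phi <= sqrt 3 / 2]; it is where [eps < 3/4] enters. *)
Lemma sqrt1D_le (R : rcfType) (phi : R) : 0 <= phi <= 3 / 4 ->
  Num.sqrt (1 + phi) <= 1 + Num.sqrt (1 - phi).
Proof.
case/andP=> phi0 phi34; have t0 := sqrtr_ge0 (1 - phi).
have t2 : Num.sqrt (1 - phi) ^+ 2 = 1 - phi by rewrite sqr_sqrtr //; lra.
rewrite -ler_sqr ?nnegrE ?sqrtr_ge0 ?addr_ge0 // sqr_sqrtr; last lra.
by move: t0 t2; set t := Num.sqrt _ => t0 t2; nra.
Qed.

Lemma stiefel_near_LambdaF (R : realType) d r lam (G : 'M[R]_(d, r) -> 'M[R]_(d, r))
    (x : 'M[R]_(d, r)) :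
  0 <= lam -> frob_norm (ortho_defect x) <= 3 / 4 ->
  exists y, ortho_defect y = 0 /\
    lam * (1 - frob_norm (ortho_defect x)) * frob_norm (x - y)
      <= frob_norm (LambdaF lam G x).
Proof.
set phi := frob_norm _ => lam0 phi34; have phi0 : 0 <= phi := frob_norm_ge0 _.
have [|y [y0 near_y]] := polar_projection (_ : phi < 1); first lra.
exists y; split=> //; rewrite -/phi in near_y.
have t0 := sqrtr_ge0 (1 - phi); set t := Num.sqrt _ in near_y t0.
rewrite -(ler_pM2r (_ : 0 < 1 + t)); last lra.
apply: le_trans (_ : _ <= lam * (1 - phi) * phi) _.
  by rewrite -!mulrA !ler_wpM2l // subr_ge0; lra.
apply: le_trans (ortho_defect_le_LambdaF x G lam0) _.
by rewrite mulrC ler_wpM2l ?frob_norm_ge0 // sqrt1D_le // phi0.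
Qed.

Lemma frob_norm_stiefel_proj_le (R : realType) d r (G y : 'M[R]_(d, r)) :
  y^T *m y = 1%:M ->
  frob_norm (G - y *m msym (y^T *m G)) <= 2 * frob_norm (mskew (G *m y^T) *m y).
Proof.
move=> yTy; set W := mskew (G *m y^T) *m y.
have -> : G - y *m msym (y^T *m G) = W + (W - y *m (y^T *m W)).
  have W_def : W = 2^-1 *: (G - y *m (G^T *m y)).
    by rewrite /W /mskew -scalemxAl mulmxBl trmx_mul trmxK -!mulmxA yTy mulmx1.
  have yyW : y *m (y^T *m W) = 2^-1 *: (y *m (y^T *m G) - y *m (G^T *m y)).
    by rewrite W_def -!scalemxAr !mulmxBr (mulmxA y^T y) yTy mul1mx.
  rewrite yyW W_def /msym -scalemxAr mulmxDr trmx_mul trmxK.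
  by apply/matrixP => i j; rewrite !mxE; lra.
clearbody W; apply: le_trans (ler_frob_normD _ _) _; rewrite mulr2n mulrDl mul1r lerD2l.
apply: ler_wsqrtr; rewrite !(frob_innerBl, frob_innerBr) (frob_innerC W (y *m _)).
rewrite !(frob_inner_mull y) mulmxA yTy mul1mx.
by have := frob_inner_ge0 (y^T *m W); lra.
Qed.

(** * The merit gradient on the Stiefel manifold *)

Section EntrywiseConvergence.
Variables (R : numFieldType) (T : Type) (F : set_system T).
Context {FF : Filter F}.

Definition entrywise_cvg m n (A : T -> 'M[R]_(m, n)) (A0 : 'M[R]_(m, n)) :=
  forall i j, (fun t => A t i j) @ F --> A0 i j.

Lemma cvg_entrywise m n (A : T -> 'M[R]_(m, n)) A0 : A @ F --> A0 -> entrywise_cvg A A0.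
Proof. by move=> AA0 i j; exact: cvg_comp AA0 (@coord_continuous _ _ _ i j A0). Qed.

Lemma cvg_sum (I : Type) (s : seq I) (g : I -> T -> R) (l : I -> R) :
  (forall i, g i @ F --> l i) -> (fun t => \sum_(i <- s) g i t) @ F --> \sum_(i <- s) l i.
Proof. by move=> gl; apply: cvg_big => //; exact: add_continuous. Qed.

Lemma entrywise_cvgD m n (A B : T -> 'M[R]_(m, n)) A0 B0 :
  entrywise_cvg A A0 -> entrywise_cvg B B0 ->
  entrywise_cvg (fun t => A t + B t) (A0 + B0).
Proof. by move=> AA0 BB0 i j; rewrite mxE; under eq_fun do rewrite mxE; exact: cvgD. Qed.

Lemma entrywise_cvgZ m n (A : T -> 'M[R]_(m, n)) A0 k :
  entrywise_cvg A A0 -> entrywise_cvg (fun t => k *: A t) (k *: A0).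
Proof. by move=> AA0 i j; rewrite mxE; under eq_fun do rewrite mxE; exact: cvgMl_tmp. Qed.

Lemma entrywise_cvg_tr m n (A : T -> 'M[R]_(m, n)) A0 :
  entrywise_cvg A A0 -> entrywise_cvg (fun t => (A t)^T) A0^T.
Proof. by move=> AA0 i j; rewrite mxE; under eq_fun do rewrite mxE; exact: AA0. Qed.

Lemma entrywise_cvg_mul m n p (A : T -> 'M[R]_(m, n)) (B : T -> 'M[R]_(n, p)) A0 B0 :
  entrywise_cvg A A0 -> entrywise_cvg B B0 ->
  entrywise_cvg (fun t => A t *m B t) (A0 *m B0).
Proof.
move=> AA0 BB0 i j; rewrite mxE; under eq_fun do rewrite mxE.
by apply: cvg_sum => k; exact: cvgM.
Qed.

End EntrywiseConvergence.

Lemma entrywise_cvg_msym (R : realType) T (F : set_system T) {FF : Filter F} m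
    (A : T -> 'M[R]_m) A0 :
  entrywise_cvg F A A0 -> entrywise_cvg F (fun t => msym (A t)) (msym A0).
Proof. by move=> AA0; exact: entrywise_cvgZ (entrywise_cvgD AA0 (entrywise_cvg_tr AA0)). Qed.

Lemma frob_inner_cvg (R : realType) T (F : set_system T) {FF : Filter F} m n
    (A B : T -> 'M[R]_(m, n)) A0 B0 :
  entrywise_cvg F A A0 -> entrywise_cvg F B B0 ->
  (fun t => frob_inner (A t) (B t)) @ F --> frob_inner A0 B0.
Proof.
move=> AA0 BB0; rewrite frob_innerE; under eq_fun do rewrite frob_innerE.
by apply: cvg_sum => i; apply: cvg_sum => j; exact: cvgM.
Qed.

Lemma is_derive_cvg (R : numFieldType) (V W : normedModType R) (g : V -> W) a v dg :
  is_derive a v g dg -> (fun t : R => t^-1 *: ((g \o shift a) (t *: v) - g a)) @ 0^' --> dg.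
Proof. by case=> + <-. Qed.

Lemma cvg_line (R : numFieldType) (V : normedModType R) (a b : V) :
  (fun t : R => t *: a + b) @ 0^' --> b.
Proof.
have t0 : (fun t : R => t) @ 0^' --> (0 : R) by exact: cvg_within.
rewrite -[X in _ --> X]add0r -(scale0r a).
exact: cvgD (cvgZr_tmp t0) (cvg_cst b).
Qed.

Lemma is_derive_gradient (R : realType) d r (g : 'M[R]_(d, r) -> R) G y h :
  has_gradient g G -> is_derive y h g (frob_inner (G y) h).
Proof.
move=> /(_ y) [dg dgE]; rewrite -dgE -deriveE //.
exact/derivableP/diff_derivable.
Qed.

Lemma is_derive_avgR (R : realType) d r n (F : 'I_n -> 'M[R]_(d, r) -> R) gF y h :
  (forall i, has_gradient (F i) (gF i)) ->
  is_derive y h (avgR F) (frob_inner (avgM gF y) h).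
Proof.
move=> gradF; have -> : avgR F = n%:R^-1 \*: \sum_(i < n) F i.
  by apply/funext => x; rewrite /avgR /= fct_sumE.
rewrite /avgM frob_innerZl frob_inner_suml.
by apply: is_deriveZ; apply: is_derive_sum => i; exact: is_derive_gradient.
Qed.

Section MeritOnStiefel.
Variables (R : realType) (d r : nat) (gam : R).
Variables (f : 'M[R]_(d, r) -> R) (gf : 'M[R]_(d, r) -> 'M[R]_(d, r)).
Variable y : 'M[R]_(d, r).
Hypothesis y_stiefel : ortho_defect y = 0.

Lemma ortho_defect_shift h t :
  ortho_defect (t *: h + y) = t *: (h^T *m y + y^T *m h + t *: (h^T *m h)).
Proof.
move: y_stiefel; rewrite /ortho_defect => /eqP; rewrite subr_eq0 => /eqP yTy.
rewrite [(t *: h + y)^T]raddfD /= [(t *: h)^T]linearZ /= mulmxDl !mulmxDr.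
rewrite -!scalemxAl -!scalemxAr yTy.
set a := h^T *m h; set b := h^T *m y; set c := y^T *m h.
by apply/matrixP => i j; rewrite !mxE; ring.
Qed.

(* Also true at [t = 0], where both sides vanish because [0^-1 = 0]. *)
Lemma merit_quotientE h t :
  t^-1 *: (merit gam f gf (t *: h + y) - merit gam f gf y) =
  t^-1 *: (f (t *: h + y) - f y)
  - 2^-1 * frob_inner (msym ((t *: h + y)^T *m gf (t *: h + y)))
                      (t^-1 *: ortho_defect (t *: h + y))
  + gam / 4 * (t * frob_inner (t^-1 *: ortho_defect (t *: h + y))
                               (t^-1 *: ortho_defect (t *: h + y))).
Proof.
have [->|t0] := eqVneq t 0.
  by rewrite invr0 !scale0r frob_inner0r !(mul0r, mulr0) subr0 addr0.
rewrite /merit y_stiefel frob_inner0r frob_norm0 expr0n /= !mulr0 !subr0 addr0.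
rewrite -frob_norm_sqr frob_innerZr frob_normZ exprMn real_normK ?num_real // /GRing.scale /=.
by field.
Qed.

Lemma ortho_defect_quotient_cvg h :
  entrywise_cvg 0^' (fun t : R => t^-1 *: ortho_defect (t *: h + y))
                    (h^T *m y + y^T *m h).
Proof.
apply: cvg_entrywise.
apply: cvg_trans (@cvg_line _ _ (h^T *m h) _); apply: near_eq_cvg; near=> t.
rewrite ortho_defect_shift scalerA mulVf ?scale1r; first exact: addrC.
by near: t; exact: nbhs_dnbhs_neq.
Unshelve. all: by end_near.
Qed.

Hypothesis f_derive : forall h, is_derive y h f (frob_inner (gf y) h).
Hypothesis gf_cont : {for y, continuous gf}.

(* As the defect vanishes at [y], the difference quotient of the term pairing it with
   [sym (x^T gf x)] tends to [<sym (y^T gf y), h^T y + y^T h>]: continuity of [gf] at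
   [y] suffices, no derivative of [gf] is needed. *)
Lemma merit_gradient_stiefel gM : has_gradient (merit gam f gf) gM ->
  gM y = gf y - y *m msym (y^T *m gf y).
Proof.
move=> gradM; apply: frob_inner_eq => h.
set S := msym (y^T *m gf y); set K := h^T *m y + y^T *m h.
have [_ <-] := is_derive_gradient y h gradM; rewrite /derive; apply: cvg_lim => //.
have line := @cvg_line _ _ h y.
have gf_line : (fun t : R => gf (t *: h + y)) @ 0^' --> gf y.
  exact: (@cvg_comp _ _ _ _ gf _ _ _ line gf_cont).
have S_cvg : entrywise_cvg 0^' (fun t : R => msym ((t *: h + y)^T *m gf (t *: h + y))) S.
  exact: entrywise_cvg_msym (entrywise_cvg_mul (entrywise_cvg_tr (cvg_entrywise line))
                                                (cvg_entrywise gf_line)).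
have Q_cvg := @ortho_defect_quotient_cvg h.
have -> : frob_inner (gf y - y *m S) h =
    frob_inner (gf y) h - 2^-1 * frob_inner S K + gam / 4 * (0 * frob_inner K K).
  rewrite mul0r mulr0 addr0 frob_innerBl frob_inner_mull /K frob_innerDr.
  rewrite -[frob_inner S (h^T *m y)]frob_inner_tr msym_tr trmx_mul trmxK.
  by field.
under eq_fun do rewrite /= merit_quotientE.
apply: cvgD; first apply: cvgB.
- exact: is_derive_cvg (f_derive h).
- exact: cvgMl_tmp (frob_inner_cvg S_cvg Q_cvg).
- apply: cvgMl_tmp; apply: cvgM; [exact: cvg_within | exact: (frob_inner_cvg Q_cvg Q_cvg)].
Qed.

Lemma merit_gradient_le_LambdaF lam gM : has_gradient (merit gam f gf) gM ->
  frob_norm (gM y) <= 2 * frob_norm (LambdaF lam gf y).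
Proof.
move=> gradM; rewrite (merit_gradient_stiefel gradM) /LambdaF y_stiefel mulmx0 scaler0 addr0.
by apply: frob_norm_stiefel_proj_le; apply/eqP; rewrite -subr_eq0 -/(ortho_defect y) y_stiefel.
Qed.

End MeritOnStiefel.

Lemma sup_ge0 (R : realType) (E : set R) : (exists2 x, E x & 0 <= x) -> 0 <= sup E.
Proof.
case=> x Ex x0; have [supE|] := pselect (has_sup E); last by move/sup_out->.
exact: le_trans x0 (sup_upper_bound supE Ex).
Qed.

Theorem lemma15 (R : realType) (d r n : nat)
  (F : 'I_n -> 'M[R]_(d, r) -> R) (gF : 'I_n -> 'M[R]_(d, r) -> 'M[R]_(d, r))
  (L eps lam gam LLc LLam : R)
  (gLc : 'M[R]_(d, r) -> 'M[R]_(d, r)) :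
  (0 < n)%N ->
  0 < eps -> eps < 3 / 4 ->
  0 < lam ->
  (* each f_i differentiable (with gradient gF i) and L-smooth *)
  (forall i, has_gradient (F i) (gF i)) ->
  (forall i, L_smooth L (F i) (gF i)) ->
  let f := avgR F in
  let gf := avgM gF in
  (* f is C^2: its gradient is differentiable with continuous derivative *)
  (forall x, differentiable gf x) ->
  (forall h, continuous (fun x => 'd gf x h)) ->
  let S := @StEps R d r eps in
  let Lhat := Num.max L (sup [set frob_norm (gf x) | x in S]) in
  let s := sup [set frob_norm (msym (x^T *m gf x)) | x in S] in
  gam >= 2 / (3 - 4 * eps) *
         (L * (1 - eps) + 3 * s
          + Lhat ^+ 2 * ((1 + eps) ^+ 2 / (lam * (1 - eps)))) ->
  (* gLc is the gradient of the merit function, L-Lipschitz on St^eps *)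
  has_gradient (merit gam f gf) gLc ->
  frob_lipschitz_on S LLc gLc ->
  (* Lambda and all Lambda_i are LLam-Lipschitz on St^eps *)
  frob_lipschitz_on S LLam (LambdaF lam gf) ->
  (forall i, frob_lipschitz_on S LLam (LambdaF lam (gF i))) ->
  let L' := Num.max Lhat (Num.max LLc LLam) in
  let C := 3 * L' / (lam * (1 - eps)) + 2 in
  forall x, S x -> frob_norm (gLc x) <= C * frob_norm (LambdaF lam gf x).
Proof.
move=> _ eps0 eps34 lam0 gradF _ f gf gf_diff _ S Lhat s _ gradM lipM lipL _ L' C x Sx.
have phi_eps : frob_norm (ortho_defect x) <= eps := Sx.
have [|y [y0 near_y]] := stiefel_near_LambdaF gf (ltW lam0)
  (_ : frob_norm (ortho_defect x) <= 3 / 4); first lra.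
have Sy : S y by rewrite /S /StEps /= y0 frob_norm0 ltW.
have grad_y := merit_gradient_le_LambdaF y0 (fun h => is_derive_avgR y h gradF)
  (differentiable_continuous (gf_diff y)) lam gradM.
have L'0 : 0 <= L'.
  rewrite /L' /Lhat !le_max sup_ge0 ?orbT //.
  by exists (frob_norm (gf x)); [exists x | exact: frob_norm_ge0].
have [LLcL' LLamL'] : LLc <= L' /\ LLam <= L' by rewrite /L' !le_max !lexx !orbT.
set D := frob_norm (x - y) in near_y; set Ln := frob_norm (LambdaF lam gf x) in near_y *.
have D0 : 0 <= D := frob_norm_ge0 _.
have c0 : 0 < lam * (1 - eps) by rewrite mulr_gt0 // subr_gt0; lra.
have cD : lam * (1 - eps) * D <= Ln.
  by apply: le_trans near_y; rewrite ler_wpM2r // ler_wpM2l ?(ltW lam0) //; lra.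
have L'D : L' * D <= L' / (lam * (1 - eps)) * Ln.
  by rewrite mulrAC ler_pdivlMr // -mulrA ler_wpM2l // mulrC.
have := lipM x y Sx Sy; have := lipL y x Sy Sx; rewrite [frob_norm (y - x)]frob_norm_distC.
have := frob_norm_le_add_dist (gLc x) (gLc y).
have := frob_norm_le_add_dist (LambdaF lam gf y) (LambdaF lam gf x).
rewrite -/D -/Ln /C mulrDl.
have := ler_wpM2r D0 LLcL'; have := ler_wpM2r D0 LLamL'; lra.
Qed.
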